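(* Let $K\ge1$ and $C\ge1$, and define for $t\in(0,1)$ $$H(t)={\rm th}\Big(\frac{C}{2}\max\{2\,{\rm arth}(t),(2\,{\rm arth}(t))^{1/K}\}\Big).$$ Then $H(t)\le C t^{1/K}$ for all $t\in(0,1)$, and thus $H$ is Hölder continuous with exponent $1/K$.
   Context: ${\rm th}$ and ${\rm arth}$ denote the hyperbolic tangent and its inverse. *)

From Stdlib Require Export Reals.
Open Scope R_scope.

Definition th (x : R) : R := (exp x - exp (- x)) / (exp x + exp (- x)).

Definition arth (t : R) : R := ln ((1 + t) / (1 - t)) / 2.

(* H(t) = th( C/2 * max{ 2 arth t, (2 arth t)^(1/K) } ), for t in (0,1);
   there 2 arth t > 0, so the real power Rpower is the usual one. *)
Definition H (K C t : R) : R :=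
  th (C / 2 * Rmax (2 * arth t) (Rpower (2 * arth t) (1 / K))).

(* th is concave on [0, oo) and vanishes at 0, so th u / u is nonincreasing there.  This gives
   th (C z) <= C th z, and comparing th at a / 2 and at a^(1/K) / 2, where a = 2 arth t and so
   th (a / 2) = t, gives the pointwise bound.  For the Hoelder bound, the subtraction formula
   th x - th y = th (x - y) (1 - th x th y), the identity
   arth t - arth s = arth ((t - s) / (1 - s t)) and the subadditivity of a |-> max {a, a^(1/K)}
   bound H t - H s by H ((t - s) / (1 - s t)) times a factor at most 2 (1 - s t)^(1/K); the
   pointwise bound applied to H ((t - s) / (1 - s t)) then yields 2 C (t - s)^(1/K). *)

From Coquelicot Require Import Coquelicot.
From Stdlib Require Import Reals Lra Psatz.
Open Scope R_scope.

Lemma le_of_is_derive_nonneg (f f' : R -> R) (a b : R) :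
  a <= b ->
  (forall x, a <= x <= b -> is_derive f x (f' x)) ->
  (forall x, a <= x <= b -> 0 <= f' x) -> f a <= f b.
Proof.
  intros hab hd hpos.
  destruct (MVT_gen f a b f') as [c [hc hmvt]].
  - intros x hx. rewrite Rmin_left, Rmax_right in hx by lra. apply hd; lra.
  - intros x hx. rewrite Rmin_left, Rmax_right in hx by lra.
    apply continuity_pt_filterlim.
    apply (ex_derive_continuous (K := R_AbsRing) (V := R_NormedModule)).
    eexists; apply hd; lra.
  - rewrite Rmin_left, Rmax_right in hc by lra.
    assert (0 <= f' c * (b - a)) by (apply Rmult_le_pos; [apply hpos|]; lra).
    lra.
Qed.

Lemma exp_le x y : x <= y -> exp x <= exp y.
Proof. intros [hlt | ->]; [left; apply exp_increasing|]; lra. Qed.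

Lemma exp_sub_exp_opp_ge z : 0 <= z -> 2 * z <= exp z - exp (- z).
Proof.
  intros hz.
  assert (htaylor := exp_ge_taylor z 2 hz). simpl in htaylor.
  rewrite exp_Ropp. assert (hE := exp_pos z). set (E := exp z) in *.
  (* Taylor gives [E - z >= 1 + z^2/2], hence [(E - z)^2 >= 1 + z^2]. *)
  assert (hsq : 1 + z * z <= (E - z) * (E - z)) by nra.
  assert (E * / E = 1) by (field; lra).
  assert (0 < / E) by (apply Rinv_0_lt_compat; lra).
  nra.
Qed.

Lemma th_exp2 x : th x = (exp (2 * x) - 1) / (exp (2 * x) + 1).
Proof.
  unfold th. replace (2 * x) with (x + x) by ring.
  rewrite exp_plus, exp_Ropp. assert (0 < exp x) by apply exp_pos.
  field. split; nra.
Qed.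

Lemma th_one_sub x : th x = 1 - 2 / (exp (2 * x) + 1).
Proof. rewrite th_exp2. assert (0 < exp (2 * x)) by apply exp_pos. field. lra. Qed.

Lemma th_0 : th 0 = 0.
Proof. unfold th. rewrite Ropp_0, exp_0. field. Qed.

Lemma th_lt_1 x : th x < 1.
Proof.
  rewrite th_one_sub. assert (0 < exp (2 * x)) by apply exp_pos.
  assert (0 < 2 / (exp (2 * x) + 1)) by (apply Rdiv_lt_0_compat; lra). lra.
Qed.

Lemma th_le x y : x <= y -> th x <= th y.
Proof.
  intros hxy. rewrite !th_one_sub.
  assert (exp (2 * x) <= exp (2 * y)) by (apply exp_le; lra).
  assert (0 < exp (2 * x)) by apply exp_pos.
  apply Rplus_le_compat_l, Ropp_le_contravar, Rmult_le_compat_l; [lra|].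
  apply Rinv_le_contravar; lra.
Qed.

Lemma th_ge0 x : 0 <= x -> 0 <= th x.
Proof. intros hx. rewrite <- th_0. now apply th_le. Qed.

Lemma th_sub x y : th x - th y = th (x - y) * (1 - th x * th y).
Proof.
  rewrite !th_exp2.
  replace (exp (2 * (x - y))) with (exp (2 * x) / exp (2 * y))
    by (unfold Rdiv; rewrite <- exp_Ropp, <- exp_plus; f_equal; ring).
  assert (0 < exp (2 * x)) by apply exp_pos. assert (0 < exp (2 * y)) by apply exp_pos.
  field. repeat split; lra.
Qed.

Lemma is_derive_th x : is_derive th x (1 - th x ^ 2).
Proof.
  unfold th. assert (0 < exp x) by apply exp_pos. assert (0 < exp (- x)) by apply exp_pos.
  auto_derive; [lra|]. field. lra.
Qed.

Lemma th_le_id x : 0 <= x -> th x <= x.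
Proof.
  intros hx.
  assert (h : 0 - th 0 <= x - th x).
  { apply (le_of_is_derive_nonneg (fun u => u - th u) (fun u => th u ^ 2)); [lra| |].
    - intros u _. replace (th u ^ 2) with (1 - (1 - th u ^ 2)) by ring.
      apply (is_derive_minus (fun u => u) th); [apply (is_derive_id (K := R_AbsRing)) | apply is_derive_th].
    - intros u _. apply pow2_ge_0. }
  rewrite th_0 in h. lra.
Qed.

Lemma mul_deriv_th_le_th u : 0 <= u -> u * (1 - th u ^ 2) <= th u.
Proof.
  intros hu.
  (* with E = exp (2 u) this reads 4 u E <= E^2 - 1, i.e. 2 sinh (2 u) >= 4 u *)
  assert (hsinh := exp_sub_exp_opp_ge (2 * u) ltac:(lra)).
  rewrite exp_Ropp in hsinh. rewrite th_exp2.
  assert (hE : 1 <= exp (2 * u)) by (rewrite <- exp_0; apply exp_le; lra).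
  set (E := exp (2 * u)) in *.
  assert (hEinv : E * / E = 1) by (field; lra).
  replace (u * (1 - ((E - 1) / (E + 1)) ^ 2)) with (4 * u * E / ((E + 1) * (E + 1)))
    by (field; lra).
  replace ((E - 1) / (E + 1)) with ((E * E - 1) / ((E + 1) * (E + 1))) by (field; lra).
  apply Rmult_le_compat_r; [apply Rlt_le, Rinv_0_lt_compat; nra|].
  nra.
Qed.

Lemma th_div_antitone x y : 0 < x <= y -> th y / y <= th x / x.
Proof.
  intros hxy.
  enough (h : - (th x / x) <= - (th y / y)) by lra.
  apply (le_of_is_derive_nonneg (fun u => - (th u / u))
           (fun u => (th u - u * (1 - th u ^ 2)) / u ^ 2)); [lra| |].
  - intros u hu.
    replace ((th u - u * (1 - th u ^ 2)) / u ^ 2)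
      with (- (((1 - th u ^ 2) * u - th u * 1) / u ^ 2)) by (field; lra).
    apply (is_derive_opp (fun u => th u / u)), is_derive_div;
      [apply is_derive_th | apply (is_derive_id (K := R_AbsRing)) | lra].
  - intros u hu. apply Rdiv_le_0_compat; [|apply pow_lt; lra].
    pose proof (mul_deriv_th_le_th u ltac:(lra)). lra.
Qed.

Lemma th_mul_le c z : 1 <= c -> 0 <= z -> th (c * z) <= c * th z.
Proof.
  intros hc [hz | <-]; [|rewrite Rmult_0_r, th_0; lra].
  assert (h := th_div_antitone z (c * z) ltac:(nra)).
  apply (Rmult_le_compat_r (c * z)) in h; [|nra].
  replace (th (c * z) / (c * z) * (c * z)) with (th (c * z)) in h by (field; lra).
  replace (th z / z * (c * z)) with (c * th z) in h by (field; lra).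
  exact h.
Qed.

Lemma th_arth t : -1 < t < 1 -> th (arth t) = t.
Proof.
  intros ht. rewrite th_exp2. unfold arth.
  replace (2 * (ln ((1 + t) / (1 - t)) / 2)) with (ln ((1 + t) / (1 - t))) by field.
  rewrite exp_ln by (apply Rdiv_lt_0_compat; lra).
  field. split; lra.
Qed.

Lemma arth_gt0 t : 0 < t < 1 -> 0 < arth t.
Proof.
  intros ht. unfold arth. apply Rdiv_lt_0_compat; [|lra].
  rewrite <- ln_1. apply ln_increasing; [lra|].
  apply Rmult_lt_reg_r with (1 - t); [lra|]. unfold Rdiv. rewrite Rmult_assoc, Rinv_l; lra.
Qed.

Lemma arth_le s t : -1 < s -> s <= t -> t < 1 -> arth s <= arth t.
Proof.
  intros hs hst ht. unfold arth. apply Rmult_le_compat_r; [lra|].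
  apply ln_le; [apply Rdiv_lt_0_compat; lra|].
  unfold Rdiv. apply Rmult_le_compat; try lra.
  - apply Rlt_le, Rinv_0_lt_compat; lra.
  - apply Rinv_le_contravar; lra.
Qed.

Lemma arth_sub s t : -1 < s < 1 -> -1 < t < 1 ->
  arth t - arth s = arth ((t - s) / (1 - s * t)).
Proof.
  intros hs ht. unfold arth.
  assert (hst : 0 < 1 - s * t) by nra.
  rewrite <- Rdiv_minus_distr, <- ln_div by (apply Rdiv_lt_0_compat; lra).
  do 2 f_equal. field. repeat split; nra.
Qed.

Lemma Rpower_gt0 a p : 0 < Rpower a p.
Proof. apply exp_pos. Qed.

Lemma Rpower_ge_id a p : 0 < a <= 1 -> p <= 1 -> a <= Rpower a p.
Proof.
  intros ha hp. unfold Rpower. rewrite <- (exp_ln a) at 1 by lra.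
  apply exp_le.
  assert (ln a <= 0) by (rewrite <- ln_1; apply ln_le; lra).
  nra.
Qed.

Lemma Rpower_le_id a p : 1 <= a -> p <= 1 -> Rpower a p <= a.
Proof. intros ha hp. rewrite <- (Rpower_1 a) at 2 by lra. now apply Rle_Rpower. Qed.

Lemma Rpower_antitone u v q : 0 < u <= v -> q <= 0 -> Rpower v q <= Rpower u q.
Proof.
  intros huv hq. unfold Rpower. apply exp_le.
  assert (ln u <= ln v) by (apply ln_le; lra).
  nra.
Qed.

Lemma Rpower_add_le x y p : 0 < x -> 0 < y -> p <= 1 ->
  Rpower (x + y) p <= Rpower x p + Rpower y p.
Proof.
  intros hx hy hp.
  (* [z^p = z * z^(p-1)] and [z^(p-1)] is antitone *)
  assert (hsplit : forall z, 0 < z -> Rpower z p = z * Rpower z (p - 1)).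
  { intros z hz. replace p with (1 + (p - 1)) at 1 by ring.
    now rewrite Rpower_plus, Rpower_1. }
  rewrite !hsplit by lra.
  assert (Rpower (x + y) (p - 1) <= Rpower x (p - 1)) by (apply Rpower_antitone; lra).
  assert (Rpower (x + y) (p - 1) <= Rpower y (p - 1)) by (apply Rpower_antitone; lra).
  nra.
Qed.

Definition maxpow (p a : R) : R := Rmax a (Rpower a p).

Lemma maxpow_ge a p : a <= maxpow p a.
Proof. apply Rmax_l. Qed.

Lemma maxpow_le a b p : 0 < a <= b -> 0 <= p -> maxpow p a <= maxpow p b.
Proof.
  intros hab hp. unfold maxpow.
  apply Rmax_le_compat; [lra|]. now apply Rle_Rpower_l.
Qed.

Lemma maxpow_add_le a b p : 0 < a -> 0 < b -> p <= 1 ->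
  maxpow p (a + b) <= maxpow p a + maxpow p b.
Proof.
  intros ha hb hp. unfold maxpow at 1. apply Rmax_case.
  - pose proof (maxpow_ge a p). pose proof (maxpow_ge b p). lra.
  - pose proof (Rpower_add_le a b p ha hb hp).
    pose proof (Rmax_r a (Rpower a p)). pose proof (Rmax_r b (Rpower b p)).
    unfold maxpow. lra.
Qed.

Lemma th_half_maxpow_arth_le t p : 0 < t < 1 -> p <= 1 ->
  th (maxpow p (2 * arth t) / 2) <= Rpower t p.
Proof.
  intros ht hp.
  assert (ha : 0 < 2 * arth t) by (pose proof (arth_gt0 t ht); lra).
  assert (htha : th (2 * arth t / 2) = t)
    by (replace (2 * arth t / 2) with (arth t) by field; apply th_arth; lra).
  set (a := 2 * arth t) in *.
  unfold maxpow. destruct (Rle_lt_dec 1 a) as [ha1 | ha1].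
  - rewrite Rmax_left by (apply Rpower_le_id; lra).
    rewrite htha. apply Rpower_ge_id; lra.
  - assert (hap : a <= Rpower a p) by (apply Rpower_ge_id; lra).
    rewrite Rmax_right by lra.
    set (ap := Rpower a p) in *.
    assert (hta : t <= a / 2) by (rewrite <- htha at 1; apply th_le_id; lra).
    (* concavity compares th at ap/2 with th (a/2) = t; then t / a <= 1 gives t / a <= (t / a)^p *)
    assert (hratio : th (ap / 2) <= ap * (t / a)).
    { pose proof (th_div_antitone (a / 2) (ap / 2) ltac:(lra)) as h.
      rewrite htha in h.
      apply (Rmult_le_compat_r (ap / 2)) in h; [|lra].
      replace (th (ap / 2) / (ap / 2) * (ap / 2)) with (th (ap / 2)) in h by (field; lra).
      replace (t / (a / 2) * (ap / 2)) with (ap * (t / a)) in h by (field; lra).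
      exact h. }
    assert (hta_pos : 0 < t / a) by (apply Rdiv_lt_0_compat; lra).
    assert (hta_le1 : t / a <= 1) by (apply Rmult_le_reg_r with a; [lra|]; field_simplify; lra).
    assert (ht_a : t / a <= Rpower (t / a) p) by (apply Rpower_ge_id; lra).
    replace (Rpower t p) with (ap * Rpower (t / a) p)
      by (unfold ap; rewrite Rpower_mult_distr by (try apply Rdiv_lt_0_compat; lra);
          f_equal; field; lra).
    assert (0 < ap) by apply Rpower_gt0.
    nra.
Qed.

Lemma holder_of_monotone (f : R -> R) (D : R -> Prop) (M p : R) : 0 <= M ->
  (forall s t, D s -> D t -> s < t ->
     f s <= f t /\ f t - f s <= M * Rpower (t - s) p) ->
  forall s t, D s -> D t -> Rabs (f s - f t) <= M * Rpower (Rabs (s - t)) p.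
Proof.
  intros hM hf s t hs ht.
  destruct (Rtotal_order s t) as [hst | [<- | hts]].
  - destruct (hf s t hs ht hst).
    rewrite Rabs_minus_sym, Rabs_right, (Rabs_minus_sym s t), Rabs_right by lra.
    assumption.
  - rewrite !Rminus_diag, !Rabs_R0.
    pose proof (Rpower_gt0 0 p). nra.
  - destruct (hf t s ht hs hts).
    rewrite Rabs_right, (Rabs_right (s - t)) by lra.
    assumption.
Qed.

Section H_estimates.

Variables K C : R.
Hypothesis hK : 1 <= K.
Hypothesis hC : 1 <= C.

Let hp : 0 < 1 / K <= 1.
Proof.
  split; [apply Rdiv_lt_0_compat; lra|].
  apply Rmult_le_reg_r with K; [lra|]. field_simplify; lra.
Qed.

Lemma H_le_C_Rpower t : 0 < t < 1 -> H K C t <= C * Rpower t (1 / K).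
Proof.
  intros ht. unfold H. fold (maxpow (1 / K) (2 * arth t)).
  pose proof (maxpow_ge (2 * arth t) (1 / K)) as hmax. pose proof (arth_gt0 t ht) as harth.
  replace (C / 2 * maxpow (1 / K) (2 * arth t))
    with (C * (maxpow (1 / K) (2 * arth t) / 2)) by field.
  apply Rle_trans with (C * th (maxpow (1 / K) (2 * arth t) / 2)).
  - apply th_mul_le; lra.
  - apply Rmult_le_compat_l; [lra|]. apply th_half_maxpow_arth_le; lra.
Qed.

Lemma le_H t : 0 < t < 1 -> t <= H K C t.
Proof.
  intros ht. unfold H. fold (maxpow (1 / K) (2 * arth t)).
  rewrite <- (th_arth t) at 1 by lra. apply th_le.
  pose proof (maxpow_ge (2 * arth t) (1 / K)) as hmax. pose proof (arth_gt0 t ht) as harth.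
  nra.
Qed.

Lemma H_le s t : 0 < s -> s <= t -> t < 1 -> H K C s <= H K C t.
Proof.
  intros hs hst ht. unfold H.
  fold (maxpow (1 / K) (2 * arth s)). fold (maxpow (1 / K) (2 * arth t)).
  apply th_le, Rmult_le_compat_l; [lra|].
  pose proof (arth_gt0 s ltac:(lra)) as hs_arth.
  pose proof (arth_le s t ltac:(lra) hst ht) as hst_arth.
  apply maxpow_le; lra.
Qed.

Lemma H_sub_le s t : 0 < s -> s < t -> t < 1 ->
  H K C t - H K C s <= 2 * C * Rpower (t - s) (1 / K).
Proof.
  intros hs hst ht.
  set (w := (t - s) / (1 - s * t)).
  assert (hst1 : 0 < 1 - s * t) by nra.
  assert (hw : 0 < w < 1).
  { split; [apply Rdiv_lt_0_compat; lra|].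
    apply Rmult_lt_reg_r with (1 - s * t); [lra|]. unfold w. field_simplify; nra. }
  set (a := 2 * arth s). set (d := 2 * arth w).
  assert (ha : 0 < a) by (pose proof (arth_gt0 s ltac:(lra)); unfold a; lra).
  assert (hd : 0 < d) by (pose proof (arth_gt0 w hw); unfold d; lra).
  assert (had : 2 * arth t = a + d) by (unfold a, d, w; rewrite <- arth_sub by lra; ring).
  set (x := C / 2 * maxpow (1 / K) (a + d)).
  set (y := C / 2 * maxpow (1 / K) a).
  assert (hHt : H K C t = th x) by (unfold x; rewrite <- had; reflexivity).
  assert (hHs : H K C s = th y) by reflexivity.
  assert (hxy : 0 <= x - y <= C / 2 * maxpow (1 / K) d).
  { pose proof (maxpow_add_le a d (1 / K) ha hd ltac:(lra)).
    pose proof (maxpow_le a (a + d) (1 / K) ltac:(lra) ltac:(lra)).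
    unfold x, y. split; nra. }
  assert (hth : 0 <= th (x - y) <= C * Rpower w (1 / K)).
  { split; [apply th_ge0; lra|].
    apply Rle_trans with (H K C w); [apply th_le, hxy | now apply H_le_C_Rpower]. }
  (* s <= th y <= th x < 1, so 1 - th x th y <= 1 - s^2 <= 2 (1 - s) *)
  assert (hfactor : 0 <= 1 - th x * th y <= 2 * Rpower (1 - s * t) (1 / K)).
  { pose proof (H_le s t hs (Rlt_le _ _ hst) ht) as hmono.
    pose proof (le_H s ltac:(lra)) as hs_H.
    pose proof (th_lt_1 x).
    assert (1 - s <= Rpower (1 - s) (1 / K)) by (apply Rpower_ge_id; lra).
    assert (Rpower (1 - s) (1 / K) <= Rpower (1 - s * t) (1 / K))
      by (apply Rle_Rpower_l; nra).
    rewrite hHt, hHs in *. split; nra. }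
  rewrite hHt, hHs, th_sub.
  apply Rle_trans with (C * Rpower w (1 / K) * (2 * Rpower (1 - s * t) (1 / K))).
  - apply Rmult_le_compat; lra.
  - replace (C * Rpower w (1 / K) * (2 * Rpower (1 - s * t) (1 / K)))
      with (2 * C * (Rpower w (1 / K) * Rpower (1 - s * t) (1 / K))) by ring.
    rewrite Rpower_mult_distr by lra.
    unfold w. replace ((t - s) / (1 - s * t) * (1 - s * t)) with (t - s) by (field; lra).
    lra.
Qed.

End H_estimates.

Theorem theorem5p3 (K C : R) (hK : 1 <= K) (hC : 1 <= C) :
  (forall t : R, 0 < t < 1 -> H K C t <= C * Rpower t (1 / K))
  /\
  (exists M : R, forall s t : R, 0 < s < 1 -> 0 < t < 1 ->
      Rabs (H K C s - H K C t) <= M * Rpower (Rabs (s - t)) (1 / K)).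
Proof.
  split.
  - exact (H_le_C_Rpower K C hK hC).
  - exists (2 * C).
    apply (holder_of_monotone (H K C) (fun t => 0 < t < 1)); [lra|].
    intros s t hs ht hst. split.
    + apply H_le; lra.
    + apply H_sub_le; lra.
Qed.
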